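(* Let $k>l>0$ be coprime integers, $\lambda=\lambda_{k,l}$, and let $$T=\begin{pmatrix}1&k(1+\lambda)\\0&1\end{pmatrix},\qquad R=\begin{pmatrix}-1&-1\\1&0\end{pmatrix}.$$ Then the group $G=\langle R,T\rangle\subseteq \mathrm{PSL}(2,\mathbb{R})$ is discrete. Moreover, $$F=\{z\in\mathbb{H}:\ -2<\operatorname{Re}z<k(1+\lambda)-2,\ |z|>1,\ |z+1|>1\}$$ is a fundamental domain for the action of $G$ on $\mathbb{H}$ by Möbius transformations.
   Context: For coprime integers $k>l>0$, $\lambda_{k,l}$ denotes the positive solution of $k(\lambda+1)=l(\lambda^{-1}+1+\lambda)$. $\mathbb{H}$ is the upper half-plane. *)

From HB Require Import structures.
From mathcomp Require Import all_boot all_order all_algebra.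
From mathcomp Require Import all_classical all_reals topology normedtype.
Set Implicit Arguments. Unset Strict Implicit. Unset Printing Implicit Defensive.
Import Order.TTheory GRing.Theory Num.Theory numFieldNormedType.Exports.
Local Open Scope ring_scope.
Local Open Scope classical_set_scope.

Definition mx2 {R : nzRingType} (a b c d : R) : 'M[R]_2 :=
  \matrix_(i < 2, j < 2)
    if i == 0 :> nat then (if j == 0 :> nat then a else b)
    else (if j == 0 :> nat then c else d).

Inductive gen_group {R : comUnitRingType} (S : 'M[R]_2 -> Prop) : 'M[R]_2 -> Prop :=
  | gg_one : gen_group S 1%:M
  | gg_gen g : S g -> gen_group S g
  | gg_inv g : S g -> gen_group S (invmx g)
  | gg_mul g h : gen_group S g -> gen_group S h -> gen_group S (g *m h).

(* Points of C are pairs (x, y) = x + i y; the upper half-plane. *)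
Definition upper_half {R : realType} : set (R * R) := [set z | 0 < z.2].

(* Möbius action of g = (a b ; c d) on z = x + i y : (a z + b) / (c z + d). *)
Definition mobius {R : realType} (g : 'M[R]_2) (z : R * R) : R * R :=
  let a := g 0 0 in let b := g 0 1 in let c := g 1 0 in let d := g 1 1 in
  let x := z.1 in let y := z.2 in
  let den := (c * x + d) ^+ 2 + (c * y) ^+ 2 in
  (((a * x + b) * (c * x + d) + a * c * y ^+ 2) / den,
   (a * d - b * c) * y / den).

(* A subgroup of PSL(2,R), given by its full preimage Gt in SL(2,R)
   (so Gt is closed under g |-> -g), is discrete iff the identity is
   isolated in Gt (entrywise topology on 2x2 matrices). *)
Definition discrete_SL {R : realType} (Gt : 'M[R]_2 -> Prop) : Prop :=
  exists eps : R, 0 < eps /\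
    forall g, Gt g -> (forall i j, `|g i j - (1%:M : 'M[R]_2) i j| < eps) ->
      g = 1%:M.

(* Fundamental domain (Katok's definition) for the action on H of the
   PSL(2,R) group whose preimage in SL(2,R) is Gt:
   F is an open subset of H, its translates by non-identity elements of
   the PSL group are disjoint from F, and the translates of its closure
   cover H. *)
Definition fundamental_domain {R : realType} (Gt : 'M[R]_2 -> Prop)
    (F : set (R * R)) : Prop :=
  [/\ F `<=` upper_half, open F,
      (forall g, Gt g -> g <> 1%:M -> g <> - 1%:M ->
         forall z, F z -> ~ F (mobius g z)) &
      (forall z, upper_half z -> exists g, Gt g /\ closure F (mobius g z))].

Definition Tmat {R : realType} (k : nat) (lam : R) : 'M[R]_2 :=
  mx2 1 (k%:R * (1 + lam)) 0 1.
Definition Rmat {R : realType} : 'M[R]_2 := mx2 (-1) (-1) 1 0.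

(* Preimage in SL(2,R) of G = <R, T> in PSL(2,R). *)
Definition Gpre {R : realType} (k : nat) (lam : R) : 'M[R]_2 -> Prop :=
  gen_group (fun g => g = Rmat \/ g = Tmat k lam \/ g = - 1%:M).

Definition Fdom {R : realType} (k : nat) (lam : R) : set (R * R) :=
  [set z | 0 < z.2 /\ -2 < z.1 /\ z.1 < k%:R * (1 + lam) - 2 /\
           1 < z.1 ^+ 2 + z.2 ^+ 2 /\ 1 < (z.1 + 1) ^+ 2 + z.2 ^+ 2].

From HB Require Import structures.
From mathcomp Require Import all_boot all_order all_algebra.
From mathcomp Require Import all_classical all_reals topology normedtype realfun.
From mathcomp Require Import ring lra zify.
Import Order.TTheory GRing.Theory Num.Theory numFieldNormedType.Exports.
Set Implicit Arguments. Unset Strict Implicit. Unset Printing Implicit Defensive.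
Local Open Scope ring_scope.
Local Open Scope classical_set_scope.

(* Put w = k (1 + lam) > 3.  F is the part of the strip -2 < Re z < w - 2, a fundamental
   domain of <T>, outside the unit disks around 0 and -1; R (of order 3 in PSL_2) maps
   the exterior of the disk around 0 into the disk around -1, and R^-1 the exterior of
   the disk around -1 into the disk around 0.  Ping-pong: a reduced word in R, R^-1, T,
   T^-1 with leftmost letter R, R^-1, T or T^-1 maps F into the disk around -1, the disk
   around 0, the half-plane Re z > w - 2 or the half-plane Re z < -2 respectively, so only
   +-1 maps a point of F into F; as a matrix near the identity keeps 2i in F, G is
   discrete.  Conversely, translate z into the strip; if it lies in one of the disks,
   R or R^-1 followed by a translation multiplies its height by at least
   (w - 2)^2 > 1, so finitely many such steps reach the closure of F. *)

Section Mx2.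
Context {R : nzRingType}.
Implicit Types a b c d : R.

Lemma mx2_eta (M : 'M[R]_2) : M = mx2 (M 0 0) (M 0 1) (M 1 0) (M 1 1).
Proof.
apply/matrixP => i j; rewrite !mxE.
by case: i => [[|[|i]] Hi]; case: j => [[|[|j]] Hj] //=; congr (M _ _); apply/val_inj.
Qed.

Lemma mx2_mul a b c d a' b' c' d' :
  mx2 a b c d *m mx2 a' b' c' d' =
  mx2 (a * a' + b * c') (a * b' + b * d') (c * a' + d * c') (c * b' + d * d').
Proof.
apply/matrixP => i j; rewrite !mxE !big_ord_recl big_ord0 !mxE /=.
by case: (i == 0 :> nat); case: (j == 0 :> nat); rewrite addr0.
Qed.

Lemma mx2_1 : 1%:M = mx2 1 0 0 1 :> 'M[R]_2.
Proof. by apply/matrixP => -[[|[|i]] Hi] [[|[|j]] Hj]; rewrite !mxE. Qed.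

Lemma mx2_opp a b c d : - mx2 a b c d = mx2 (- a) (- b) (- c) (- d).
Proof.
apply/matrixP => i j; rewrite !mxE.
by case: (i == 0 :> nat); case: (j == 0 :> nat).
Qed.

End Mx2.

Lemma det_mx2 (R : comNzRingType) (a b c d : R) : \det (mx2 a b c d) = a * d - b * c.
Proof.
rewrite (expand_det_row _ 0) !big_ord_recl big_ord0 /cofactor !det_mx11 !mxE /=.
by rewrite /bump /= expr0 expr1 addr0 mul1r mulN1r mulrN.
Qed.

Lemma mulmx1_invmx (R : comUnitRingType) n (A B : 'M[R]_n) :
  A *m B = 1%:M -> invmx A = B.
Proof.
move=> AB1; have [uA _] := mulmx1_unit AB1.
by rewrite -[invmx A]mulmx1 -AB1 mulmxA mulVmx // mul1mx.
Qed.

Section Mobius.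
Variable R : realType.
Implicit Types (a b c d x y : R) (z : R * R) (A B : 'M[R]_2).

Lemma mobius_mx2 a b c d x y : mobius (mx2 a b c d) (x, y) =
  (((a * x + b) * (c * x + d) + a * c * y ^+ 2) / ((c * x + d) ^+ 2 + (c * y) ^+ 2),
   (a * d - b * c) * y / ((c * x + d) ^+ 2 + (c * y) ^+ 2)).
Proof. by rewrite /mobius !mxE. Qed.

Lemma mobius_den_gt0 a b c d x y : 0 < y -> a * d - b * c != 0 ->
  0 < (c * x + d) ^+ 2 + (c * y) ^+ 2.
Proof.
move=> y0 det0; have [c0|c0] := eqVneq c 0.
  rewrite c0 mul0r add0r mul0r expr0n addr0 exprn_even_gt0 //=.
  by apply: contraNneq det0 => d0; rewrite c0 d0 !mulr0 subrr.
by rewrite ltr_wpDl ?sqr_ge0 // exprn_even_gt0 //= mulf_neq0 // gt_eqF.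
Qed.

Lemma mobius_mul A B z : 0 < z.2 -> \det A != 0 -> \det B != 0 ->
  mobius (A *m B) z = mobius A (mobius B z).
Proof.
rewrite (mx2_eta A) (mx2_eta B) !det_mx2 mx2_mul; case: z => x y /= y0 dA dB.
set p := A 0 0; set q := A 0 1; set r := A 1 0; set s := A 1 1.
set a := B 0 0; set b := B 0 1; set c := B 1 0; set d := B 1 1.
rewrite !mobius_mx2.
have dD := mobius_den_gt0 x y0 dB.
have dE : ((r * a + s * c) * x + (r * b + s * d)) ^+ 2 + ((r * a + s * c) * y) ^+ 2 != 0.
  rewrite gt_eqF // (mobius_den_gt0 (a := p * a + q * c) (b := p * b + q * d) x y0) //.
  have -> : (p * a + q * c) * (r * b + s * d) - (p * b + q * d) * (r * a + s * c)
          = (p * s - q * r) * (a * d - b * c) by ring.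
  exact: mulf_neq0.
set D := (c * x + d) ^+ 2 + (c * y) ^+ 2.
have -> : (r * (((a * x + b) * (c * x + d) + a * c * y ^+ 2) / D) + s) ^+ 2 +
    (r * ((a * d - b * c) * y / D)) ^+ 2 =
   (((r * a + s * c) * x + (r * b + s * d)) ^+ 2 + ((r * a + s * c) * y) ^+ 2) / D.
  by rewrite /D; field; rewrite gt_eqF.
by congr (_, _); rewrite /D; field; rewrite dE gt_eqF.
Qed.

Lemma mobiusN A z : mobius (- A) z = mobius A z.
Proof.
rewrite (mx2_eta A) mx2_opp; case: z => x y; rewrite !mobius_mx2.
by congr (_, _); congr (_ / _); ring.
Qed.

Lemma mobius1 z : mobius 1%:M z = z.
Proof. by case: z => x y; rewrite mx2_1 mobius_mx2; congr (_, _); field. Qed.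

Lemma mobius_2i_near1 (g : 'M[R]_2) : \det g = 1 ->
  (forall i j, `|g i j - (1%:M : 'M[R]_2) i j| < 1 / 10) ->
  [/\ -1 < (mobius g (0, 2)).1, (mobius g (0, 2)).1 < 1 & 1 < (mobius g (0, 2)).2].
Proof.
move=> det1 near1; rewrite (mx2_eta g) det_mx2 in det1.
have := near1 0 0; have := near1 0 1; have := near1 1 0; have := near1 1 1.
rewrite (mx2_eta g) mobius_mx2 det1 !mxE /= !subr0 !ltr_norml.
set a := g 0 0; set b := g 0 1; set c := g 1 0; set d := g 1 1.
move=> /andP[d1 d2] /andP[c1 c2] /andP[b1 b2] /andP[a1 a2].
have -> : (c * 0 + d) ^+ 2 + (c * 2) ^+ 2 = d * d + 4 * (c * c) by ring.
have -> : (a * 0 + b) * (c * 0 + d) + a * c * 2 ^+ 2 = b * d + 4 * (a * c) by ring.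
have D1 : 8 / 10 < d * d + 4 * (c * c) by nra.
have D2 : d * d + 4 * (c * c) < 13 / 10 by nra.
have N1 : - (7 / 10) < b * d + 4 * (a * c) by nra.
have N2 : b * d + 4 * (a * c) < 7 / 10 by nra.
have D0 : 0 < d * d + 4 * (c * c) by lra.
by rewrite ltr_pdivlMr // ltr_pdivrMr // ltr_pdivlMr //; split; lra.
Qed.

End Mobius.

Section RotationTranslation.
Context {R : realType}.
Implicit Types (s t x y : R).

Definition transl t : 'M[R]_2 := mx2 1 t 0 1.
Definition Rinv : 'M[R]_2 := mx2 0 1 (-1) (-1).

Lemma transl_add s t : transl s *m transl t = transl (s + t).
Proof. by rewrite mx2_mul; congr mx2; ring. Qed.

Lemma transl0 : transl 0 = 1%:M.
Proof. by rewrite mx2_1. Qed.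

Lemma invmx_transl t : invmx (transl t) = transl (- t).
Proof. by apply: mulmx1_invmx; rewrite transl_add subrr transl0. Qed.

Lemma det_transl t : \det (transl t) = 1.
Proof. by rewrite det_mx2; ring. Qed.

Lemma mobius_transl t (z : R * R) : mobius (transl t) z = (z.1 + t, z.2).
Proof. by case: z => x y; rewrite mobius_mx2; congr (_, _) => /=; field. Qed.

Lemma Rmat2 : Rmat *m Rmat = Rinv :> 'M[R]_2.
Proof. by rewrite mx2_mul; congr mx2; ring. Qed.
Lemma Rinv2 : Rinv *m Rinv = Rmat :> 'M[R]_2.
Proof. by rewrite mx2_mul; congr mx2; ring. Qed.
Lemma Rmat_Rinv : Rmat *m Rinv = 1%:M :> 'M[R]_2.
Proof. by rewrite mx2_mul mx2_1; congr mx2; ring. Qed.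
Lemma Rinv_Rmat : Rinv *m Rmat = 1%:M :> 'M[R]_2.
Proof. by rewrite mx2_mul mx2_1; congr mx2; ring. Qed.

Lemma invmx_Rmat : invmx Rmat = Rinv :> 'M[R]_2.
Proof. exact: mulmx1_invmx Rmat_Rinv. Qed.

Lemma det_Rmat : \det Rmat = 1 :> R.
Proof. by rewrite det_mx2; ring. Qed.

Lemma mobius_Rmat x y : 0 < x ^+ 2 + y ^+ 2 ->
  mobius Rmat (x, y) = (-1 - x / (x ^+ 2 + y ^+ 2), y / (x ^+ 2 + y ^+ 2)).
Proof. by move=> r0; rewrite mobius_mx2; congr (_, _); field; rewrite gt_eqF. Qed.

Lemma mobius_Rinv x y : 0 < (x + 1) ^+ 2 + y ^+ 2 ->
  mobius Rinv (x, y) = (- (x + 1) / ((x + 1) ^+ 2 + y ^+ 2), y / ((x + 1) ^+ 2 + y ^+ 2)).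
Proof. by move=> r0; rewrite mobius_mx2; congr (_, _); field; rewrite gt_eqF. Qed.

(* The image under R or R^-1 of a point of height y in one of the unit disks (see
   below): it leaves both disks and gains the factor of a squared horizontal distance. *)
Definition lifted y (u : R * R) := [/\ 0 < u.2, 1 <= u.1 ^+ 2 + u.2 ^+ 2,
  1 <= (u.1 + 1) ^+ 2 + u.2 ^+ 2 & y * u.1 ^+ 2 <= u.2 \/ y * (u.1 + 1) ^+ 2 <= u.2].

Lemma mobius_Rmat_lifted x y : 0 < y -> x ^+ 2 + y ^+ 2 < 1 ->
  x ^+ 2 + y ^+ 2 <= (x + 1) ^+ 2 + y ^+ 2 -> lifted y (mobius Rmat (x, y)).
Proof.
move=> y0 r1 cmp; have r0 : 0 < x ^+ 2 + y ^+ 2 by have := sqr_ge0 x; nra.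
rewrite mobius_Rmat //; set r := x ^+ 2 + y ^+ 2 in r0 r1 cmp *.
have e0 : (-1 - x / r) ^+ 2 + (y / r) ^+ 2 = ((x + 1) ^+ 2 + y ^+ 2) / r.
  by rewrite /r; field; rewrite gt_eqF.
have e1 : (-1 - x / r + 1) ^+ 2 + (y / r) ^+ 2 = r^-1.
  by rewrite /r; field; rewrite gt_eqF.
have ir1 : 1 < r^-1 by rewrite invf_gt1.
split=> /=; [exact: divr_gt0 | by rewrite e0 ler_pdivlMr // mul1r | by rewrite e1 ltW |].
have -> : y / r = y * ((-1 - x / r + 1) ^+ 2 + (y / r) ^+ 2) by rewrite e1.
by right; rewrite ler_pM2l //; have := sqr_ge0 (y / r); lra.
Qed.

Lemma mobius_Rinv_lifted x y : 0 < y -> (x + 1) ^+ 2 + y ^+ 2 < 1 ->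
  (x + 1) ^+ 2 + y ^+ 2 <= x ^+ 2 + y ^+ 2 -> lifted y (mobius Rinv (x, y)).
Proof.
move=> y0 r1 cmp; have r0 : 0 < (x + 1) ^+ 2 + y ^+ 2 by have := sqr_ge0 (x + 1); nra.
rewrite mobius_Rinv //; set r := (x + 1) ^+ 2 + y ^+ 2 in r0 r1 cmp *.
have e0 : (- (x + 1) / r) ^+ 2 + (y / r) ^+ 2 = r^-1.
  by rewrite /r; field; rewrite gt_eqF.
have e1 : (- (x + 1) / r + 1) ^+ 2 + (y / r) ^+ 2 = (x ^+ 2 + y ^+ 2) / r.
  by rewrite /r; field; rewrite gt_eqF.
have ir1 : 1 < r^-1 by rewrite invf_gt1.
split=> /=; [exact: divr_gt0 | by rewrite e0 ltW | by rewrite e1 ler_pdivlMr // mul1r |].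
have -> : y / r = y * ((- (x + 1) / r) ^+ 2 + (y / r) ^+ 2) by rewrite e0.
by left; rewrite ler_pM2l //; have := sqr_ge0 (y / r); lra.
Qed.

End RotationTranslation.

Lemma continuous_sqr_add (T : topologicalType) (R : realType) (f g : T -> R) :
  continuous f -> continuous g -> continuous (fun z => f z ^+ 2 + g z ^+ 2).
Proof.
have csqr := @exprn_continuous R 2.
move=> cf cg z; apply: (@continuousD _ _ _ (fun z => f z ^+ 2) (fun z => g z ^+ 2)).
  exact: continuous_comp (cf z) (csqr (f z)).
exact: continuous_comp (cg z) (csqr (g z)).
Qed.

Section PingPong.
Variables (R : realType) (w : R).
Hypothesis w_gt3 : 3 < w.
Implicit Types (x y t : R) (z : R * R) (g h : 'M[R]_2).

Definition Gw : 'M[R]_2 -> Prop :=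
  gen_group (fun g => g = Rmat \/ g = transl w \/ g = - 1%:M).

Local Notation G := Gw.

Lemma G_det g : G g -> \det g = 1.
Proof.
have detN1 : \det (- 1%:M : 'M[R]_2) = 1 by rewrite mx2_1 mx2_opp det_mx2; ring.
elim=> {g} [|g [|[|]] ->|g [|[|]] ->|g h _ dg _ dh].
- exact: det1.
- exact: det_Rmat.
- exact: det_transl.
- exact: detN1.
- by rewrite det_inv det_Rmat invr1.
- by rewrite det_inv det_transl invr1.
- by rewrite det_inv detN1 invr1.
- by rewrite det_mulmx dg dh mulr1.
Qed.

Lemma mobius_mulG A B z : G A -> G B -> 0 < z.2 ->
  mobius (A *m B) z = mobius A (mobius B z).
Proof. by move=> /G_det dA /G_det dB y0; apply: mobius_mul; rewrite ?dA ?dB ?oner_eq0. Qed.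

Lemma G_Rmat : G Rmat. Proof. by apply: gg_gen; left. Qed.
Lemma G_Rinv : G Rinv. Proof. by rewrite -invmx_Rmat; apply: gg_inv; left. Qed.

Lemma G_gen s : s = Rmat \/ s = Rinv \/ s = transl w \/ s = transl (- w) -> G s.
Proof.
case=> [->|[->|[->|->]]]; first exact: G_Rmat; first exact: G_Rinv.
  by apply: gg_gen; right; left.
by rewrite -invmx_transl; apply: gg_inv; right; left.
Qed.

Lemma G_transl_int (m : int) : G (transl (m%:~R * w)).
Proof.
have GT n : G (transl (n%:R * w)) /\ G (transl (- (n%:R * w))).
  elim: n => [|n [IH IHN]]; first by rewrite mul0r oppr0 transl0; split; exact: gg_one.
  rewrite -natr1 mulrDl mul1r opprD -!transl_add; split; apply: gg_mul => //.
    by apply: gg_gen; right; left.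
  by rewrite -invmx_transl; apply: gg_inv; right; left.
by case: m => n; [case: (GT n) | rewrite NegzE mulrNz mulNr; case: (GT n.+1)].
Qed.

Inductive letter := Lnil | LR | LRi | LT | LTi.

Definition is_rot l := if l is (LR | LRi) then true else false.

(* [reduced l h]: h is a reduced word in R, R^-1, T, T^-1 with leftmost letter [l]
   (R^2 = R^-1, so rotation letters never follow each other). *)
Inductive reduced : letter -> 'M[R]_2 -> Prop :=
| reduced_nil : reduced Lnil 1%:M
| reduced_R l h : reduced l h -> ~~ is_rot l -> reduced LR (Rmat *m h)
| reduced_Ri l h : reduced l h -> ~~ is_rot l -> reduced LRi (Rinv *m h)
| reduced_T l h : reduced l h -> l <> LTi -> reduced LT (transl w *m h)
| reduced_Ti l h : reduced l h -> l <> LT -> reduced LTi (transl (- w) *m h).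

Lemma reduced_mul_gen l h s : reduced l h ->
  s = Rmat \/ s = Rinv \/ s = transl w \/ s = transl (- w) ->
  exists l', reduced l' (s *m h).
Proof.
have TTi : transl w *m transl (- w) = 1%:M by rewrite transl_add subrr transl0.
have TiT : transl (- w) *m transl w = 1%:M by rewrite transl_add addNr transl0.
move=> H [->|[->|[->|->]]]; case: l H => H.
all: try by [exists LR; exact: (reduced_R H) | exists LRi; exact: (reduced_Ri H)
  | exists LT; exact: (reduced_T H) | exists LTi; exact: (reduced_Ti H)].
all: inversion H; subst.
- by exists LRi; rewrite mulmxA Rmat2; exact: (reduced_Ri H0).
- by exists l; rewrite mulmxA Rmat_Rinv mul1mx.
- by exists l; rewrite mulmxA Rinv_Rmat mul1mx.
- by exists LR; rewrite mulmxA Rinv2; exact: (reduced_R H0).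
- by exists l; rewrite mulmxA TTi mul1mx.
- by exists l; rewrite mulmxA TiT mul1mx.
Qed.

Lemma reduced_mul l1 h1 l2 h2 : reduced l1 h1 -> reduced l2 h2 ->
  exists l, reduced l (h1 *m h2).
Proof.
move=> H1 H2; elim: H1 => {l1 h1}; first by exists l2; rewrite mul1mx.
all: move=> l h _ [l' IH] _.
all: by rewrite -mulmxA; apply: (reduced_mul_gen IH); do ?[by left | right].
Qed.

Lemma G_reduced g : G g -> exists l h, reduced l h /\ (g = h \/ g = - h).
Proof.
have word s : s = Rmat \/ s = Rinv \/ s = transl w \/ s = transl (- w) ->
    exists l h, reduced l h /\ (s = h \/ s = - h).
  by move=> /(reduced_mul_gen reduced_nil) [l]; rewrite mulmx1 => Hs; exists l, s; split; [|left].
have N1 : exists l h, reduced l h /\ (- 1%:M = h \/ - 1%:M = - h :> 'M[R]_2).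
  by exists Lnil, 1%:M; split; [exact: reduced_nil | right].
have invN1 : invmx (- 1%:M) = - 1%:M :> 'M[R]_2.
  by apply: mulmx1_invmx; rewrite mulNmx mulmxN opprK mul1mx.
elim=> {g} [|g [|[|]] ->|g [|[|]] ->|g g' _ [l1 [h1 [H1 e1]]] _ [l2 [h2 [H2 e2]]]].
- by exists Lnil, 1%:M; split; [exact: reduced_nil | left].
- by apply: word; left.
- by apply: word; right; right; left.
- exact: N1.
- by rewrite invmx_Rmat; apply: word; right; left.
- by rewrite invmx_transl; apply: word; right; right; right.
- by rewrite invN1.
- have [l Hl] := reduced_mul H1 H2; exists l, (h1 *m h2); split=> //.
  by case: e1 => ->; case: e2 => ->; rewrite ?mulNmx ?mulmxN ?opprK; [left|right|right|left].
Qed.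

Lemma reduced_G l h : reduced l h -> G h.
Proof.
elim=> {l h}; first exact: gg_one.
all: by move=> l h _ Gh _; apply: gg_mul Gh; apply: G_gen; do ?[by left | right].
Qed.

Definition Fw : set (R * R) := [set z | 0 < z.2 /\ -2 < z.1 /\ z.1 < w - 2 /\
  1 < z.1 ^+ 2 + z.2 ^+ 2 /\ 1 < (z.1 + 1) ^+ 2 + z.2 ^+ 2].

(* Where a reduced word with leftmost letter [l] sends [Fw]. *)
Definition region (l : letter) : set (R * R) :=
  match l with
  | Lnil => Fw
  | LR => [set z | 0 < z.2 /\ (z.1 + 1) ^+ 2 + z.2 ^+ 2 < 1]
  | LRi => [set z | 0 < z.2 /\ z.1 ^+ 2 + z.2 ^+ 2 < 1]
  | LT => [set z | 0 < z.2 /\ w - 2 < z.1]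
  | LTi => [set z | 0 < z.2 /\ z.1 < -2]
  end.

Lemma region_gt0 l z : region l z -> 0 < z.2.
Proof. by case: l => -[]. Qed.

Lemma region_outside_disks l z : region l z -> ~~ is_rot l ->
  1 < z.1 ^+ 2 + z.2 ^+ 2 /\ 1 < (z.1 + 1) ^+ 2 + z.2 ^+ 2.
Proof.
have w3 := w_gt3; case: z => x y; case: l => //= -[y0]; first by case=> _ [_ [? ?]].
all: by move=> x_out _; split; nra.
Qed.

Lemma region_gt l z : region l z -> l <> LTi -> -2 < z.1.
Proof.
have w3 := w_gt3; case: z => x y; case: l => //= -[y0]; first by case.
all: by move=> *; nra.
Qed.

Lemma region_lt l z : region l z -> l <> LT -> z.1 < w - 2.
Proof.
have w3 := w_gt3; case: z => x y; case: l => //= -[y0]; first by case=> _ [].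
all: by move=> *; nra.
Qed.

Lemma mobius_Rmat_region x y : 0 < y -> 1 < x ^+ 2 + y ^+ 2 ->
  region LR (mobius Rmat (x, y)).
Proof.
move=> y0 r1; have r0 := lt_trans ltr01 r1.
rewrite mobius_Rmat //; split => /=; first exact: divr_gt0.
have -> : (-1 - x / (x ^+ 2 + y ^+ 2) + 1) ^+ 2 + (y / (x ^+ 2 + y ^+ 2)) ^+ 2
    = (x ^+ 2 + y ^+ 2)^-1 by field; rewrite gt_eqF.
by rewrite invf_lt1.
Qed.

Lemma mobius_Rinv_region x y : 0 < y -> 1 < (x + 1) ^+ 2 + y ^+ 2 ->
  region LRi (mobius Rinv (x, y)).
Proof.
move=> y0 r1; have r0 := lt_trans ltr01 r1.
rewrite mobius_Rinv //; split => /=; first exact: divr_gt0.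
have -> : (- (x + 1) / ((x + 1) ^+ 2 + y ^+ 2)) ^+ 2 + (y / ((x + 1) ^+ 2 + y ^+ 2)) ^+ 2
    = ((x + 1) ^+ 2 + y ^+ 2)^-1 by field; rewrite gt_eqF.
by rewrite invf_lt1.
Qed.

Lemma reduced_region l h z : reduced l h -> Fw z -> region l (mobius h z).
Proof.
have w3 := w_gt3; move=> Hh Fz; have y0 : 0 < z.2 by case: Fz.
elim: Hh => {l h}; first by rewrite mobius1.
all: move=> l h Hh IH Hl; rewrite mobius_mulG //;
  [|by apply: G_gen; do ?[by left | right] | exact: reduced_G Hh].
- have [out _] := region_outside_disks IH Hl; move: (region_gt0 IH) out.
  by case: (mobius h z) => x y; exact: mobius_Rmat_region.
- have [_ out] := region_outside_disks IH Hl; move: (region_gt0 IH) out.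
  by case: (mobius h z) => x y; exact: mobius_Rinv_region.
- move: (region_gt0 IH) (region_gt IH Hl); case: (mobius h z) => x y.
  by rewrite mobius_transl /= => *; split; lra.
- move: (region_gt0 IH) (region_lt IH Hl); case: (mobius h z) => x y.
  by rewrite mobius_transl /= => *; split; lra.
Qed.

Lemma region_Fw_disjoint l z : region l z -> l <> Lnil -> ~ Fw z.
Proof. by case: z => x y; rewrite /Fw; case: l => //= -[_ ?] _ [_ [? [? [? ?]]]]; lra. Qed.

Lemma G_Fw_disjoint g : G g -> g <> 1%:M -> g <> - 1%:M ->
  forall z, Fw z -> ~ Fw (mobius g z).
Proof.
move=> /G_reduced [l [h [Hh gh]]] g1 gN1 z Fz.
have -> : mobius g z = mobius h z by case: gh => ->; rewrite ?mobiusN.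
case: l Hh => Hh; first by inversion Hh; subst; case: gh.
all: exact: region_Fw_disjoint (reduced_region Hh Fz) _.
Qed.

(* A matrix within 1/10 of the identity keeps 2i inside [Fw]. *)
Lemma G_discrete : discrete_SL G.
Proof.
have w3 := w_gt3; exists (1 / 10); split=> [|g Gg near1]; first lra.
have [x1 x2 y1] := mobius_2i_near1 (G_det Gg) near1.
have [//|/eqP g1] := eqVneq g 1%:M; exfalso.
have gN1 : g <> - 1%:M.
  by move=> gN1; move: (near1 0 0); rewrite gN1 !mxE /= ltr_norml => /andP[]; lra.
have F2i : Fw (0, 2) by rewrite /Fw /=; lra.
apply: (G_Fw_disjoint Gg g1 gN1 F2i).
case: (mobius g (0, 2)) x1 x2 y1 => x y /= *; rewrite /Fw /=; nra.
Qed.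

Definition Fcl : set (R * R) := [set z | 0 < z.2 /\ -2 <= z.1 /\ z.1 <= w - 2 /\
  1 <= z.1 ^+ 2 + z.2 ^+ 2 /\ 1 <= (z.1 + 1) ^+ 2 + z.2 ^+ 2].

Definition in_disks z := z.1 ^+ 2 + z.2 ^+ 2 < 1 \/ (z.1 + 1) ^+ 2 + z.2 ^+ 2 < 1.

Lemma translate_into_strip x : exists t,
  [/\ t = 0 \/ w <= t \/ t <= - w, G (transl t), -2 <= x + t & x + t < w - 2].
Proof.
have w0 : 0 < w by have := w_gt3; lra.
set q := Num.floor ((x + 2) / w).
have q1 : q%:~R * w <= x + 2 by rewrite -ler_pdivlMr // floor_le.
have q2 : x + 2 < (q + 1)%:~R * w by rewrite -ltr_pdivrMr // floorD1_gt.
rewrite intrD mulrDl mul1r in q2.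
exists ((- q)%:~R * w); split; [|exact: G_transl_int|lra|lra].
rewrite mulrNz mulNr; case: q {q1 q2} => [[|n]|n]; first by left; rewrite mul0r oppr0.
  by right; right; rewrite lerN2; apply: ler_peMl; [exact: ltW | rewrite ler1z].
by right; left; rewrite NegzE mulrNz mulNr opprK; apply: ler_peMl; [exact: ltW | rewrite ler1z].
Qed.

Lemma far_translate_disks a v t : 1 <= a ^+ 2 + v ^+ 2 -> 1 <= (a + 1) ^+ 2 + v ^+ 2 ->
  t = 0 \/ w <= t \/ t <= - w -> -2 <= a + t -> in_disks (a + t, v) ->
  (w - 2) ^+ 2 <= a ^+ 2 /\ (w - 2) ^+ 2 <= (a + 1) ^+ 2.
Proof.
have w3 := w_gt3; rewrite /in_disks /= => out0 out1 [->|[tw|tw]] lo disks.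
- by exfalso; rewrite addr0 in disks; case: disks; lra.
- have : a < 1 - w by case: disks; nra.
  by move=> h; split; nra.
- by split; nra.
Qed.

Lemma strip_Fcl_or_disks x y : 0 < y -> -2 <= x -> x < w - 2 ->
  Fcl (x, y) \/ in_disks (x, y).
Proof.
rewrite /Fcl /in_disks /= => y0 lo hi.
case: (lerP 1 (x ^+ 2 + y ^+ 2)) => out0; last by right; left.
case: (lerP 1 ((x + 1) ^+ 2 + y ^+ 2)) => out1; last by right; right.
by left; do !split=> //; exact: ltW.
Qed.

Lemma shift_to_strip y u : 0 < y -> lifted y u ->
  exists t, G (transl t) /\ (Fcl (mobius (transl t) u) \/ (w - 2) ^+ 2 * y <= u.2).
Proof.
case: u => a v y0 [/= v0 out0 out1 high].
have [t [far Gt lo hi]] := translate_into_strip a.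
exists t; split=> //; rewrite mobius_transl.
have [|disks] := strip_Fcl_or_disks v0 lo hi; first by left.
have [c0 c1] := far_translate_disks out0 out1 far lo disks.
by right; case: high; nra.
Qed.

Lemma reduce_step x y : 0 < y -> exists g, G g /\
  (Fcl (mobius g (x, y)) \/ y < 1 /\ (w - 2) ^+ 2 * y <= (mobius g (x, y)).2).
Proof.
move=> y0; have [t [_ Gt lo hi]] := translate_into_strip x.
have Tz : mobius (transl t) (x, y) = (x + t, y) by rewrite mobius_transl.
have [F1|disks] := strip_Fcl_or_disks y0 lo hi.
  by exists (transl t); rewrite Tz; split; [|left].
rewrite /in_disks /= in disks; set x1 := x + t in disks.
have y1 : y < 1 by have := sqr_ge0 x1; have := sqr_ge0 (x1 + 1); case: disks; nra.
have [rho [Grho lift]] : exists rho, G rho /\ lifted y (mobius rho (x1, y)).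
  case: (lerP (x1 ^+ 2 + y ^+ 2) ((x1 + 1) ^+ 2 + y ^+ 2)) => cmp.
    by exists Rmat; split; [exact: G_Rmat | apply: mobius_Rmat_lifted => //; case: disks; lra].
  by exists Rinv; split; [exact: G_Rinv | apply: mobius_Rinv_lifted; rewrite ?ltW //; case: disks; lra].
have [t' [Gt' res]] := shift_to_strip y0 lift.
have Grt : G (rho *m transl t) by apply: gg_mul.
exists (transl t' *m (rho *m transl t)); split; first exact: gg_mul.
rewrite !mobius_mulG // Tz; case: res => [|high]; first by left.
by right; rewrite mobius_transl.
Qed.

(* Induction on the number n of steps still allowed: a step replaces the height y by
   y' >= (w - 2)^2 y, turning y (1 + (n + 1) ((w - 2)^2 - 1)) > 1 into
   y' (1 + n ((w - 2)^2 - 1)) > 1. *)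
Lemma G_cover z : 0 < z.2 -> exists g, G g /\ Fcl (mobius g z).
Proof.
have w3 := w_gt3; have c1 : 1 < (w - 2) ^+ 2 by nra.
suff cover n z' : 0 < z'.2 -> 1 < z'.2 * (1 + n%:R * ((w - 2) ^+ 2 - 1)) ->
    exists g, G g /\ Fcl (mobius g z').
  move=> y0; apply: (cover (Num.bound (z.2^-1 / ((w - 2) ^+ 2 - 1)))) => //.
  have := @archi_boundP _ (z.2^-1 / ((w - 2) ^+ 2 - 1)).
  rewrite divr_ge0 ?invr_ge0 ?subr_ge0 ?ltW // ltr_pdivrMr ?subr_gt0 // => /(_ isT) hb.
  have := mulfV (lt0r_neq0 y0); nra.
elim: n z' => [|n IH] [x y] /= y0 hy.
all: have [g [Gg [Fg|[y1 hg]]]] := reduce_step x y0; first by exists g.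
  by rewrite mul0r addr0 mulr1 in hy; lra.
have [||g' [Gg' Fg']] := IH (mobius g (x, y)).
- by have := mulr_gt0 (lt_trans ltr01 c1) y0; lra.
- rewrite -natr1 in hy; set c := (w - 2) ^+ 2 in hy hg c1 *.
  set y' := (mobius g (x, y)).2 in hg *; set P := n%:R * (c - 1).
  have P0 : 0 <= P by rewrite mulr_ge0 // subr_ge0 ltW.
  have : y * P <= y' * P by rewrite ler_wpM2r //; nra.
  have : y * (1 + (n%:R + 1) * (c - 1)) = c * y + y * P by rewrite /P; ring.
  nra.
by exists (g' *m g); split; [exact: gg_mul | rewrite mobius_mulG].
Qed.

Lemma open_Fw : open Fw.
Proof.
have cfst : continuous (@fst R R) by move=> z; exact: cvg_fst.
have csnd : continuous (@snd R R) by move=> z; exact: cvg_snd.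
have cfst1 : continuous (fun z : R * R => z.1 + 1).
  by move=> z; apply: (@continuousD _ _ _ fst (fun=> (1 : R))); [exact: cfst | exact: cvg_cst].
apply: openI; first exact: (continuousP _).1 csnd _ (@open_gt _ 0).
apply: openI; first exact: (continuousP _).1 cfst _ (@open_gt _ _).
apply: openI; first exact: (continuousP _).1 cfst _ (@open_lt _ _).
apply: openI; apply: (continuousP _).1 (@open_gt _ 1).
  exact: continuous_sqr_add.
exact: continuous_sqr_add.
Qed.

(* Moving from a point of [Fcl] towards the centre line x = w/2 - 2 of the strip while
   rising with slope K/d keeps x inside the strip, and K is large enough that both
   squared distances to 0 and -1 increase to first order. *)
Lemma Fw_approach x y d K t : Fcl (x, y) -> d = w / 2 - 2 - x ->
  y * K = x ^+ 2 + d ^+ 2 + (x + 1) ^+ 2 + 1 -> 0 < t -> t <= 1 ->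
  Fw (x + t * d, y + t * K).
Proof.
have w3 := w_gt3; rewrite /Fcl /Fw /= => -[y0 [lo [hi [out0 out1]]]] dE yK t0 t1.
have K0 : 0 < K.
  have : 0 < y * K by rewrite yK; have := sqr_ge0 x; have := sqr_ge0 d; have := sqr_ge0 (x + 1); lra.
  by rewrite pmulr_rgt0.
have in0 : 0 < t * (x * d + y * K).
  apply: mulr_gt0 => //; rewrite yK; have := sqr_ge0 (x + d); have := sqr_ge0 (x + 1).
  by have := sqr_ge0 x; have := sqr_ge0 d; lra.
have in1 : 0 < t * ((x + 1) * d + y * K).
  apply: mulr_gt0 => //; rewrite yK; have := sqr_ge0 (x + 1 + d).
  by have := sqr_ge0 (x + 1); have := sqr_ge0 d; have := sqr_ge0 x; lra.
have := mulr_gt0 t0 K0; have := sqr_ge0 (t * d); have := sqr_ge0 (t * K).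
have : 0 <= (1 - t) * (x + 2) by apply: mulr_ge0; lra.
have : 0 <= (1 - t) * (w - 2 - x) by apply: mulr_ge0; lra.
have : 0 < t * w by apply: mulr_gt0 => //; lra.
rewrite dE in in0 in1 *; move=> *; do !split; nra.
Qed.

Lemma Fcl_closure z : Fcl z -> closure Fw z.
Proof.
case: z => x y Fz B /nbhs_ballP [e e0 ballB].
have y0 : 0 < y by case: Fz.
set d := w / 2 - 2 - x; set K := (x ^+ 2 + d ^+ 2 + (x + 1) ^+ 2 + 1) / y.
have yK : y * K = x ^+ 2 + d ^+ 2 + (x + 1) ^+ 2 + 1 by rewrite /K mulrC divfK ?lt0r_neq0.
have K0 : 0 <= K.
  apply: divr_ge0 (ltW y0).
  by have := sqr_ge0 x; have := sqr_ge0 d; have := sqr_ge0 (x + 1); lra.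
have dK0 : 0 < `|d| + K + 1 by have := normr_ge0 d; lra.
set t := Num.min 1 (e / (`|d| + K + 1)).
have t0 : 0 < t by rewrite lt_min ltr01 divr_gt0.
have t1 : t <= 1 by rewrite ge_min lexx.
have te : t * (`|d| + K + 1) <= e by rewrite -ler_pdivlMr // ge_min lexx orbT.
exists (x + t * d, y + t * K); split; first exact: Fw_approach.
apply: ballB; split; rewrite /ball /= opprD addNKr normrN normrM (gtr0_norm t0).
all: by rewrite ?(ger0_norm K0); have := normr_ge0 d; nra.
Qed.

End PingPong.

(* For k >= 3 this is immediate; otherwise (k, l) = (2, 1), which forces
   lam^2 + lam = 1, hence lam > 1/2. *)
Lemma translation_gt3 (R : realType) (k l : nat) (lam : R) :
  (0 < l)%N -> (l < k)%N -> 0 < lam ->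
  k%:R * (lam + 1) = l%:R * (lam^-1 + 1 + lam) -> 3 < k%:R * (1 + lam).
Proof.
move=> l0 lk lam0 e; have [k3|k2] := leqP 3 k.
  have k3' : (3 : R) <= k%:R by rewrite (ler_nat R 3 k).
  nra.
have [? ?] : k = 2%N /\ l = 1%N by lia.
subst k l.
have : lam * (2%:R * (lam + 1)) = lam * (1%:R * (lam^-1 + 1 + lam)) by rewrite e.
by rewrite mul1r !mulrDr mulfV ?gt_eqF //; nra.
Qed.

Theorem mainTheorem8 (R : realType) (k l : nat) (lam : R) :
  (0 < l)%N -> (l < k)%N -> coprime k l ->
  0 < lam -> k%:R * (lam + 1) = l%:R * (lam^-1 + 1 + lam) ->
  discrete_SL (Gpre k lam) /\ fundamental_domain (Gpre k lam) (Fdom k lam).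
Proof.
(* Only k (1 + lam) > 3 matters. *)
move=> l0 lk _ lam0 e; have w3 := translation_gt3 l0 lk lam0 e.
split; first exact: G_discrete w3.
split; [by move=> z [] | exact: open_Fw | exact: G_Fw_disjoint w3 |].
move=> z z0; have [g [Gg Fg]] := G_cover w3 z0.
by exists g; split=> //; apply: Fcl_closure Fg.
Qed.
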